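(* Let $d$ be a prime, $n\ge 1$, $0\le k\le n$, and let $L\subset\mathbb{F}_d^{2n}$ be a subspace with $L\subset L^{\perp}$ and $\dim L=n-k$. Fix hyperbolic pairs $(g_1,h_1),\dots,(g_n,h_n)$ adapted to $L$, a unit vector $\ket{\overline{0^n}}$, the resulting code subspaces $\mathcal{C}^{(s)}$, $s\in\mathbb{F}_d^{n-k}$, coset representatives $\hat{x}(t)$, $t\in\mathbb{F}_d^{n-k}$, and the maps $\mathcal{R}^{(s,t)}$, all as described in the context. Let $P_n$ be a probability distribution on $\mathbb{F}_d^{2n}$ and let $\mathcal{A}:\mathcal{B}(\mathcal{H}^{\otimes n})\to\mathcal{B}(\mathcal{H}^{\otimes n})$ be the channel $\sigma\mapsto\sum_{x\in\mathbb{F}_d^{2n}}P_n(x)N_x\sigma N_x^{\dagger}$. Then for all $s,t\in\mathbb{F}_d^{n-k}$, $$F_{\rm e}\big(\pi_{\mathcal{C}^{(s)}},\ \mathcal{R}^{(s,t)}\mathcal{A}\big)=P_n\big(\hat{x}(t)+L\big)=\sum_{x\in\hat{x}(t)+L}P_n(x).$$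
   Context: $\mathcal{H}$ is a Hilbert space of prime dimension $d$ with orthonormal basis $\ket{0},\dots,\ket{d-1}$ indexed by $\mathbb{F}_d=\mathbb{Z}/d\mathbb{Z}$; $\omega$ is a primitive $d$-th root of unity. Define unitaries $X\ket{a}=\ket{a-1}$, $Z\ket{a}=\omega^a\ket{a}$, and for $(a,b)\in\mathbb{F}_d^2$ put $N_{(a,b)}=i^{ab}X^aZ^b$ if $d=2$ (with $i=\sqrt{-1}$) and $N_{(a,b)}=X^aZ^b$ if $d>2$. Identify $((x_1,z_1),\dots,(x_n,z_n))$ with $y=(x_1,z_1,\dots,x_n,z_n)\in\mathbb{F}_d^{2n}$ and set $N_y=N_{(x_1,z_1)}\otimes\cdots\otimes N_{(x_n,z_n)}$ on $\mathcal{H}^{\otimes n}$. The symplectic form is $\langle y,y'\rangle=\sum_{i=1}^n(x_iz_i'-z_ix_i')$, and $L^{\perp}=\{y:\langle x,y\rangle=0\ \forall x\in L\}$. Hyperbolic pairs adapted to $L$: vectors $g_1,\dots,g_n,h_1,\dots,h_n\in\mathbb{F}_d^{2n}$ with $g_1,\dots,g_{n-k}$ a basis of $L$ and $\langle g_i,h_j\rangle=\delta_{ij}$, $\langle g_i,g_j\rangle=0$, $\langle h_i,h_j\rangle=0$ for all $i,j$. Let $\ket{\overline{0^n}}$ be a unit vector with $N_{g_i}\ket{\overline{0^n}}=\ket{\overline{0^n}}$ for $i=1,\dots,n$, and for $l\in\mathbb{F}_d^n$ let $\ket{\overline{l}}=\prod_{i=1}^n(N_{h_i})^{l_i}\ket{\overline{0^n}}$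 (these form an orthonormal basis of $\mathcal{H}^{\otimes n}$). For $s\in\mathbb{F}_d^{n-k}$, $\mathcal{C}^{(s)}=\mathrm{span}\{\ket{\overline{(s,u)}}:u\in\mathbb{F}_d^k\}$, $\Pi_s$ is the orthogonal projection onto $\mathcal{C}^{(s)}$, and $\pi_{\mathcal{C}^{(s)}}=\Pi_s/d^k$. For each $t\in\mathbb{F}_d^{n-k}$, $\hat{x}(t)$ is a chosen element of the coset $\{x\in\mathbb{F}_d^{2n}:\langle g_i,x\rangle=t_i,\ i=1,\dots,n-k\}$ of $L^{\perp}$. For $s,t\in\mathbb{F}_d^{n-k}$, $\mathcal{R}^{(s,t)}$ is the completely positive map $\sigma\mapsto R_t^{(s)}\sigma R_t^{(s)\dagger}$ with $R_t^{(s)}=N_{\hat{x}(t)}^{\dagger}\Pi_{t+s}$. $F_{\rm e}$ denotes the (unnormalized) entanglement fidelity: for a density operator $\rho$ and a completely positive map $\mathcal{E}$ with Kraus operators $E_j$, $F_{\rm e}(\rho,\mathcal{E})=\sum_j|\mathrm{tr}(\rho E_j)|^2$. Composition $\mathcal{M}\mathcal{L}$ means $\sigma\mapsto\mathcal{M}(\mathcal{L}(\sigma))$. *)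

From HB Require Import structures.
From mathcomp Require Import all_boot all_order all_algebra.
Set Implicit Arguments. Unset Strict Implicit. Unset Printing Implicit Defensive.
Import Order.TTheory GRing.Theory Num.Theory.
Local Open Scope ring_scope.

(* A vector y = ((x_1,z_1),...,(x_n,z_n)) of F_d^{2n} is stored as the
   n x 2 matrix whose i-th row is (x_i, z_i). *)
Definition pvec (d n : nat) := 'M['F_d]_(n, 2).
Definition xc (d n : nat) (y : pvec d n) (i : 'I_n) : 'F_d := y i ord0.
Definition zc (d n : nat) (y : pvec d n) (i : 'I_n) : 'F_d := y i ord_max.

Definition symp (d n : nat) (y y' : pvec d n) : 'F_d :=
  \sum_(i < n) (xc y i * zc y' i - zc y i * xc y' i).

(* basis of H^{(x)n}: |a_1 ... a_n>, a : F_d^n *)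
Definition bidx (d n : nat) := 'rV['F_d]_n.
Definition op (C : numClosedFieldType) (d n : nat) := 'M[C]_#|bidx d n|.
Definition vec (C : numClosedFieldType) (d n : nat) := 'cV[C]_#|bidx d n|.

Definition adj (C : numClosedFieldType) m p (A : 'M[C]_(m, p)) : 'M[C]_(p, m) :=
  (map_mx Num.conj A)^T.

(* single-qudit operators, rows/cols indexed by enum_rank of F_d *)
Definition Xq (C : numClosedFieldType) (d : nat) : 'M[C]_#|'F_d| :=
  \matrix_(r, c) ((enum_val r == enum_val c - 1) %:R).   (* X|c> = |c-1> *)
Definition Zq (C : numClosedFieldType) (d : nat) (w : C) : 'M[C]_#|'F_d| :=
  \matrix_(r, c) ((r == c)%:R * w ^+ (val (enum_val c))).
Definition Nq (C : numClosedFieldType) (d : nat) (w : C) (a b : 'F_d) : 'M[C]_#|'F_d| :=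
  (if d == 2 then 'i ^+ (val a * val b) else 1) *:
    (Xq C d ^+ val a *m Zq d w ^+ val b).

Definition tens (C : numClosedFieldType) (d n : nat) (A : 'I_n -> 'M[C]_#|'F_d|)
  : op C d n :=
  \matrix_(r, c) \prod_(k < n)
     A k (enum_rank ((enum_val r : bidx d n) 0 k)) (enum_rank ((enum_val c : bidx d n) 0 k)).

Definition Nop (C : numClosedFieldType) (d n : nat) (w : C) (y : pvec d n) : op C d n :=
  tens (fun i => Nq w (xc y i) (zc y i)).

Definition ketl (C : numClosedFieldType) (d n : nat) (w : C) (h : 'I_n -> pvec d n)
  (v0 : vec C d n) (l : 'rV['F_d]_n) : vec C d n :=
  (\prod_(i < n) Nop w (h i) ^+ val (l 0 i)) *m v0.

(* l = (s,u) for some u in F_d^k : the first n-k coordinates of l are s *)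
Definition codel (d n k : nat) (s : 'rV['F_d]_(n - k)) (l : 'rV['F_d]_n) : Prop :=
  forall i : 'I_(n - k), l 0 (widen_ord (leq_subr k n) i) = s 0 i.

Definition orth_proj_onto (C : numClosedFieldType) m (P : 'M[C]_m) (S : 'cV[C]_m -> Prop) : Prop :=
  (forall v, S v -> P *m v = v) /\
  (forall u : 'cV[C]_m, (forall v, S v -> adj v *m u = 0) -> P *m u = 0).

(* unnormalized entanglement fidelity of a CP map given by Kraus operators E_j *)
Definition Fe (C : numClosedFieldType) m (rho : 'M[C]_m) (I : finType) (E : I -> 'M[C]_m) : C :=
  \sum_(j : I) `|\tr (rho *m E j)| ^+ 2.

(* Kraus operators of the composition M L : sigma |-> M (L sigma) *)
Definition kcomp (C : numClosedFieldType) m (I J : finType)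
  (M : I -> 'M[C]_m) (L : J -> 'M[C]_m) : I * J -> 'M[C]_m :=
  fun p => M p.1 *m L p.2.

(* the Pauli channel A : sigma |-> sum_x P(x) N_x sigma N_x^dagger, via its
   Kraus operators sqrt(P x) N_x *)
Definition pauli_kraus (C : numClosedFieldType) (d n : nat) (w : C) (P : pvec d n -> C)
  : pvec d n -> op C d n :=
  fun x => sqrtC (P x) *: Nop w x.

From HB Require Import structures.
From mathcomp Require Import all_boot all_order all_algebra.
From mathcomp Require Import ring.
Set Implicit Arguments. Unset Strict Implicit. Unset Printing Implicit Defensive.
Import Order.TTheory GRing.Theory Num.Theory.
Local Open Scope ring_scope.

(* Write Pi s as the sum of the rank-one projectors onto the code states |l>, l in
   code s.  Since N_xhat(t) maps code space s onto code space t + s, the projector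
   Pi (t + s) drops out of each Kraus trace, and N_xhat(t)^dagger N_x is N_y with
   y = x - xhat(t) up to a phase.  The diagonal entry <l|N_y|l> is <v0|N_y|v0> times
   the character l |-> omega^(sum_i <y,h_i> l_i).  The first factor has modulus 1
   when y commutes with all the g_i and vanishes otherwise; summing the character over
   the d^k code states of code space s gives d^k when <y,h_i> = 0 for the last k
   indices i, and 0 otherwise.  Together the two conditions say y is in L,
   so each Kraus term contributes P x exactly when x - xhat(t) is in L. *)

Section Character.
Variables (C : numClosedFieldType) (d : nat) (w : C).
Hypotheses (Hd : prime d) (Hw : d.-primitive_root w).

Definition expw (a : 'F_d) : C := w ^+ a.

Lemma expw_natr m : expw m%:R = w ^+ m.
Proof. by rewrite /expw val_Fp_nat // (prim_expr_mod Hw). Qed.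

Lemma expw0 : expw 0 = 1.
Proof. exact: expr0. Qed.

Lemma expwD a b : expw (a + b) = expw a * expw b.
Proof. by rewrite /expw -exprD -[in RHS]expw_natr natrD !natr_Zp. Qed.

Lemma expwM a b : expw (a * b) = expw a ^+ b.
Proof. by rewrite /expw -exprM -[in RHS]expw_natr natrM !natr_Zp. Qed.

Lemma expw_sum I (r : seq I) (P : pred I) (F : I -> 'F_d) :
  expw (\sum_(i <- r | P i) F i) = \prod_(i <- r | P i) expw (F i).
Proof. exact: (big_morph expw expwD expw0). Qed.

Lemma expw_eq1 a : (expw a == 1) = (a == 0).
Proof.
rewrite /expw -(prim_order_dvd Hw); apply/idP/eqP => [|->]; last exact: dvdn0.
have lt_ad : (a < d)%N by rewrite -[X in (_ < X)%N](Fp_cast Hd) ltn_ord.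
by rewrite /dvdn modn_small // => /eqP a0; apply: val_inj.
Qed.

Lemma norm_expw a : `|expw a| = 1.
Proof.
have d_gt0 : (0 < d)%N by rewrite prime_gt0.
have /eqP w1 : `|w| == 1.
  by rewrite -(pexpr_eq1 d_gt0) // -normrX (prim_expr_order Hw) normr1.
by rewrite /expw normrX w1 expr1n.
Qed.

Lemma expw_neq0 a : expw a != 0.
Proof. by rewrite -normr_eq0 norm_expw oner_eq0. Qed.

Lemma conj_expw a : (expw a)^* = expw (- a).
Proof.
apply: (mulIf (expw_neq0 a)).
by rewrite -expwD addNr expw0 mulrC -normCK norm_expw expr1n.
Qed.

Lemma conj_expw_mul_eq1 a b : ((expw a)^* * expw b == 1) = (a == b).
Proof. by rewrite conj_expw -expwD expw_eq1 addrC subr_eq0. Qed.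

Lemma sum_expw_dot m (b : 'I_m -> 'F_d) :
  \sum_(u : 'rV['F_d]_m) expw (\sum_j b j * u 0 j) =
  (d ^ m)%:R * [forall j, b j == 0]%:R.
Proof.
case: (boolP [forall j, b j == 0]) => [/forallP b0 | /forallPn [j0 bj0]].
  rewrite (eq_bigr (fun _ => 1)) => [|u _]; last first.
    by rewrite big1 ?expw0 // => j _; rewrite (eqP (b0 j)) mul0r.
  by rewrite sumr_const card_mx card_Fp // mul1n mulr1.
set S := \sum_(u : 'rV['F_d]_m) _.
have ES : S = expw (b j0) * S.
  rewrite {1}/S (reindex_inj (addIr (delta_mx 0 j0))) mulr_sumr /=.
  apply: eq_bigr => u _; rewrite -expwD; congr expw.
  rewrite (bigD1 j0) //= [in RHS](bigD1 j0) //= !mxE /= eqxx mulrDr mulr1 addrAC addrC.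
  congr (_ + (_ + _)); apply: eq_bigr => j /negbTE nj0.
  by rewrite !mxE nj0 andbF addr0.
suff -> : S = 0 by rewrite mulr0.
apply/eqP; move/eqP: ES; rewrite -subr_eq0 -{1}[S]mul1r -mulrBl mulf_eq0.
by rewrite subr_eq0 eq_sym expw_eq1 (negbTE bj0).
Qed.

End Character.

Section Adjoint.
Variable C : numClosedFieldType.

Lemma adjM m p q (A : 'M[C]_(m, p)) (B : 'M[C]_(p, q)) : adj (A *m B) = adj B *m adj A.
Proof. by rewrite /adj map_mxM trmx_mul. Qed.

Lemma adjZ m p (a : C) (A : 'M[C]_(m, p)) : adj (a *: A) = a^* *: adj A.
Proof. by apply/matrixP => i j; rewrite !mxE rmorphM. Qed.

Lemma adjK m p (A : 'M[C]_(m, p)) : adj (adj A) = A.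
Proof. by apply/matrixP => i j; rewrite !mxE conjCK. Qed.

Lemma adjD m p (A B : 'M[C]_(m, p)) : adj (A + B) = adj A + adj B.
Proof. by apply/matrixP => i j; rewrite !mxE rmorphD. Qed.

Lemma adj0 m p : adj (0 : 'M[C]_(m, p)) = 0.
Proof. by apply/matrixP => i j; rewrite !mxE rmorph0. Qed.

Lemma adj_sum m p I (r : seq I) (P : pred I) (F : I -> 'M[C]_(m, p)) :
  adj (\sum_(i <- r | P i) F i) = \sum_(i <- r | P i) adj (F i).
Proof. exact: (big_morph _ (@adjD m p) (@adj0 m p)). Qed.

Lemma adj1 m : adj (1%:M : 'M[C]_m) = 1%:M.
Proof. by apply/matrixP => i j; rewrite !mxE eq_sym rmorph_nat. Qed.

End Adjoint.

Section Unitary.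
Variables (C : numClosedFieldType) (N : nat).
Implicit Types (A B U : 'M[C]_N) (u v : 'cV[C]_N).

Definition unitary U := adj U *m U = 1%:M.

Lemma unitary1 : unitary 1%:M.
Proof. by rewrite /unitary adj1 mulmx1. Qed.

Lemma unitaryM A B : unitary A -> unitary B -> unitary (A *m B).
Proof.
by rewrite /unitary adjM => HA HB; rewrite mulmxA -(mulmxA (adj B)) HA mulmx1.
Qed.

Lemma unitaryX A m : unitary A -> unitary (A ^+ m).
Proof.
move=> HA; elim: m => [|m IH]; first by rewrite expr0; exact: unitary1.
by rewrite exprS; apply: unitaryM.
Qed.

Lemma unitary_prod I (r : seq I) (F : I -> 'M[C]_N) :
  (forall i, unitary (F i)) -> unitary (\prod_(i <- r) F i).
Proof.
move=> HF; elim: r => [|i r IH]; first by rewrite big_nil; exact: unitary1.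
by rewrite big_cons; apply: unitaryM.
Qed.

Lemma unitary_eigen_orth U u v (a b : C) :
  unitary U -> U *m u = a *: u -> U *m v = b *: v -> a^* * b != 1 ->
  adj u *m v = 0.
Proof.
move=> HU Hu Hv ab1.
have E : adj u *m v = (a^* * b) *: (adj u *m v).
  rewrite -{1}[v]mul1mx -HU -mulmxA mulmxA -adjM Hu Hv adjZ.
  by rewrite -scalemxAl -scalemxAr scalerA.
apply/eqP; move/eqP: E; rewrite -subr_eq0 -{1}[adj u *m v]scale1r -scalerBl.
by rewrite scaler_eq0 subr_eq0 eq_sym (negbTE ab1).
Qed.

Lemma unitary_map_unit_norm U u v (c : C) :
  unitary U -> adj u *m u = 1%:M -> adj v *m v = 1%:M -> U *m u = c *: v ->
  `|c| = 1.
Proof.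
move=> HU Hu Hv HUu.
have : adj (U *m u) *m (U *m u) = 1%:M by rewrite adjM mulmxA -(mulmxA (adj u)) HU mulmx1.
rewrite HUu adjZ -scalemxAl -scalemxAr scalerA Hv => /matrixP/(_ 0 0).
rewrite !mxE eqxx mulr1 mulrC -normCK => /eqP.
by rewrite sqrp_eq1 // => /eqP.
Qed.

Lemma scaled_commX A B (c : C) m : A *m B = c *: (B *m A) ->
  A *m B ^+ m = c ^+ m *: (B ^+ m *m A).
Proof.
move=> AB; elim: m => [|m IH]; first by rewrite !expr0 mulmx1 mul1mx scale1r.
rewrite exprS -[_ * _]/(_ *m _) mulmxA AB -scalemxAl -mulmxA IH.
by rewrite -scalemxAr scalerA -exprS mulmxA.
Qed.

Lemma scaled_comm_prod I (r : seq I) A (F : I -> 'M[C]_N) (c : I -> C) :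
  (forall i, A *m F i = c i *: (F i *m A)) ->
  A *m \prod_(i <- r) F i = (\prod_(i <- r) c i) *: (\prod_(i <- r) F i *m A).
Proof.
move=> AF; elim: r => [|i r IH]; first by rewrite !big_nil mulmx1 mul1mx scale1r.
rewrite !big_cons -[_ * _]/(_ *m _) mulmxA AF -scalemxAl -mulmxA IH.
by rewrite -scalemxAr scalerA mulmxA.
Qed.

End Unitary.

Lemma orthonormal_complete (C : numClosedFieldType) (I : finType)
    (e : I -> 'cV[C]_#|I|) :
  (forall i j, adj (e i) *m e j = (i == j)%:R%:M) ->
  \sum_i e i *m adj (e i) = 1%:M.
Proof.
move=> e_on; pose E : 'M[C]_#|I| := \matrix_(r, c) e (enum_val c) r 0.
have /mulmx1C EE : adj E *m E = 1%:M.
  apply/matrixP => c c'; rewrite !mxE.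
  transitivity ((adj (e (enum_val c)) *m e (enum_val c')) 0 0).
    by rewrite !mxE; apply: eq_bigr => r _; rewrite !mxE.
  by rewrite e_on !mxE (inj_eq enum_val_inj).
rewrite -EE; apply/matrixP => r r'; rewrite summxE !mxE.
rewrite (reindex _ (onW_bij _ (enum_val_bij I))) /=.
by apply: eq_bigr => c _; rewrite !mxE big_ord1 !mxE.
Qed.

Section Qudit.
Variables (C : numClosedFieldType) (d : nat) (w : C).
Hypotheses (Hd : prime d) (Hw : d.-primitive_root w).
Local Notation ev := (@enum_val 'F_d predT).
Local Notation Nq := (@Nq C d w).

Lemma enum_val_eqE (j : 'I_#|'F_d|) v : (ev j == v) = (j == enum_rank v).
Proof. by rewrite -(can_eq enum_valK) enum_rankK. Qed.

Lemma XqX m : Xq C d ^+ m = \matrix_(r, c) ((ev r == ev c - m%:R)%:R : C).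
Proof.
elim: m => [|m IH].
  by apply/matrixP => r c; rewrite expr0 !mxE subr0 (can_eq enum_valK).
rewrite exprS IH; apply/matrixP => r c; rewrite !mxE.
under eq_bigr => j _ do rewrite !mxE.
rewrite (bigD1 (enum_rank (ev c - m%:R))) //= big1 ?addr0.
  by rewrite enum_rankK eqxx mulr1 mulrSr opprD addrA.
by move=> j Hj; rewrite [ev j == _]enum_val_eqE (negbTE Hj) mulr0.
Qed.

Lemma ZqX m : Zq d w ^+ m = \matrix_(r, c) ((r == c)%:R * w ^+ (m * ev c)%N).
Proof.
elim: m => [|m IH].
  by apply/matrixP => r c; rewrite expr0 !mxE mul0n expr0 mulr1.
rewrite exprS IH; apply/matrixP => r c; rewrite !mxE.
under eq_bigr => j _ do rewrite !mxE.
rewrite (bigD1 c) //= big1 ?addr0.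
  by rewrite eqxx mul1r -mulrA -exprD mulSn.
by move=> j /negbTE ->; rewrite mul0r mulr0.
Qed.

Definition pauli_phase (a b : 'F_d) : C := if d == 2 then 'i ^+ (a * b) else 1.

Lemma norm_pauli_phase a b : `|pauli_phase a b| = 1.
Proof. by rewrite /pauli_phase; case: ifP => _; rewrite ?normrX ?normCi ?expr1n ?normr1. Qed.

Lemma pauli_phase_neq0 a b : pauli_phase a b != 0.
Proof. by rewrite -normr_eq0 norm_pauli_phase oner_eq0. Qed.

Lemma NqE a b :
  Nq a b = \matrix_(r, c) (pauli_phase a b * ((ev r == ev c - a)%:R * expw w (b * ev c))).
Proof.
apply/matrixP => r c; rewrite /Nq XqX ZqX !mxE -/(pauli_phase a b); congr (_ * _).
under eq_bigr => j _ do rewrite !mxE.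
rewrite (bigD1 c) //= big1 ?addr0.
  by rewrite eqxx mul1r natr_Zp (expwM Hd Hw) exprM.
by move=> j /negbTE ->; rewrite mul0r mulr0.
Qed.

Lemma mul_NqE a b a' b' : Nq a b *m Nq a' b' =
  \matrix_(r, c) (pauli_phase a b * pauli_phase a' b' * ((ev r == ev c - a' - a)%:R *
        (expw w (b * (ev c - a')) * expw w (b' * ev c)))).
Proof.
rewrite !NqE; apply/matrixP => r c; rewrite !mxE.
under eq_bigr => j _ do rewrite !mxE.
rewrite (bigD1 (enum_rank (ev c - a'))) //= big1 ?addr0.
  by rewrite enum_rankK eqxx mul1r; ring.
by move=> j Hj; rewrite [ev j == ev c - _]enum_val_eqE (negbTE Hj) !(mul0r, mulr0).
Qed.

Lemma Nq_commute a b a' b' :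
  Nq a b *m Nq a' b' = expw w (a * b' - b * a') *: (Nq a' b' *m Nq a b).
Proof.
rewrite !mul_NqE; apply/matrixP => r c; rewrite !mxE.
have -> : ev c - a - a' = ev c - a' - a by ring.
rewrite -!(expwD Hd Hw).
have -> : b * (ev c - a') + b' * ev c = a * b' - b * a' + (b' * (ev c - a) + b * ev c) by ring.
by rewrite !(expwD Hd Hw); ring.
Qed.

Definition Nq_mul_phase (a b a' b' : 'F_d) : C :=
  pauli_phase a b * pauli_phase a' b' / pauli_phase (a + a') (b + b') * expw w (- (b * a')).

Lemma norm_Nq_mul_phase a b a' b' : `|Nq_mul_phase a b a' b'| = 1.
Proof.
by rewrite /Nq_mul_phase !normrM normfV !norm_pauli_phase (norm_expw Hd Hw) invr1 !mulr1.
Qed.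

Lemma Nq_mul a b a' b' : Nq a b *m Nq a' b' = Nq_mul_phase a b a' b' *: Nq (a + a') (b + b').
Proof.
rewrite mul_NqE NqE; apply/matrixP => r c; rewrite !mxE.
have -> : ev c - (a + a') = ev c - a' - a by ring.
rewrite -!(expwD Hd Hw).
have -> : b * (ev c - a') + b' * ev c = - (b * a') + (b + b') * ev c by ring.
rewrite !(expwD Hd Hw) /Nq_mul_phase.
by field; exact: pauli_phase_neq0.
Qed.

Lemma Nq_unitary a b : unitary (Nq a b).
Proof.
rewrite /unitary /adj NqE; apply/matrixP => r c; rewrite !mxE.
under eq_bigr => j _ do rewrite !mxE.
rewrite (bigD1 (enum_rank (ev r - a))) //= big1 ?addr0.
  rewrite enum_rankK eqxx (inj_eq (addIr _)) (inj_eq enum_val_inj).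
  case: eqP => [->|_]; last by rewrite !(mul0r, mulr0, rmorph0).
  rewrite !rmorphM /= conjC1 !mul1r mulrACA -!normCKC norm_pauli_phase.
  by rewrite (norm_expw Hd Hw) expr1n mulr1.
move=> j Hj; rewrite [ev j == ev r - a]enum_val_eqE (negbTE Hj).
by rewrite !(mul0r, mulr0, rmorph0).
Qed.

Lemma Nq0 : Nq 0 0 = 1%:M.
Proof.
rewrite NqE; apply/matrixP => r c; rewrite !mxE subr0 mul0r expw0 mulr1.
by rewrite /pauli_phase if_same mul1r (inj_eq enum_val_inj).
Qed.

End Qudit.

Section Tensor.
Variables (C : numClosedFieldType) (d n : nat).
Implicit Types A B : 'I_n -> 'M[C]_#|'F_d|.
Local Notation tens := (@tens C d n).
Local Notation digit r k := (enum_rank ((enum_val r : bidx d n) 0 k)).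

Definition digits (r : 'I_#|bidx d n|) : {ffun 'I_n -> 'I_#|'F_d|} := [ffun k => digit r k].

Lemma digits_bij : bijective digits.
Proof.
exists (fun f : {ffun 'I_n -> 'I_#|'F_d|} => enum_rank (\row_k enum_val (f k) : bidx d n)) => [r|f].
  rewrite /digits -[RHS]enum_valK; congr enum_rank.
  by apply/rowP => k; rewrite !mxE ffunE enum_rankK.
by apply/ffunP => k; rewrite /digits ffunE enum_rankK mxE enum_valK.
Qed.

Lemma eq_tens A B : (forall i, A i = B i) -> tens A = tens B.
Proof. by move=> AB; apply/matrixP => r c; rewrite !mxE; apply: eq_bigr => i _; rewrite AB. Qed.

Lemma tensM A B : tens A *m tens B = tens (fun i => A i *m B i).
Proof.
apply/matrixP => r c; rewrite !mxE.
under [RHS]eq_bigr => i _ do rewrite mxE.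
rewrite bigA_distr_bigA /= (reindex digits); last exact: onW_bij digits_bij.
apply: eq_bigr => m _; rewrite !mxE -big_split /=.
by apply: eq_bigr => i _; rewrite ffunE.
Qed.

Lemma tensZ (c : 'I_n -> C) A : tens (fun i => c i *: A i) = (\prod_i c i) *: tens A.
Proof.
apply/matrixP => r s; rewrite !mxE -big_split /=.
by apply: eq_bigr => i _; rewrite mxE.
Qed.

Lemma tens1 : tens (fun=> 1%:M) = 1%:M.
Proof.
apply/matrixP => r c; rewrite !mxE; case: (eqVneq r c) => [->|rc].
  by rewrite big1 // => i _; rewrite mxE eqxx.
have [i ri] : exists i, (enum_val r : bidx d n) 0 i != (enum_val c : bidx d n) 0 i.
  apply/existsP; apply: contraR rc; rewrite negb_exists => /forallP rc.
  rewrite -(inj_eq enum_val_inj); apply/eqP/rowP => i.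
  exact/eqP/negPn/rc.
by rewrite (bigD1 i) //= mxE (inj_eq enum_rank_inj) (negbTE ri) mul0r.
Qed.

Lemma tens_adj A : adj (tens A) = tens (fun i => adj (A i)).
Proof.
apply/matrixP => r c; rewrite !mxE rmorph_prod.
by apply: eq_bigr => i _; rewrite !mxE.
Qed.

End Tensor.

Section Symplectic.
Variables d n : nat.
Implicit Types y u v : pvec d n.

Lemma sympC u v : symp u v = - symp v u.
Proof. by rewrite /symp -sumrN; apply: eq_bigr => i _; ring. Qed.

Lemma sympDr y u v : symp y (u + v) = symp y u + symp y v.
Proof. by rewrite /symp /xc /zc -big_split; apply: eq_bigr => i _ /=; rewrite !mxE; ring. Qed.

Lemma sympZr y u a : symp y (a *: u) = a * symp y u.
Proof. by rewrite /symp /xc /zc mulr_sumr; apply: eq_bigr => i _ /=; rewrite !mxE; ring. Qed.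

Lemma symp0r y : symp y 0 = 0.
Proof. by rewrite -(scale0r 0) sympZr mul0r. Qed.

Lemma symp_sumr y I (r : seq I) (P : pred I) (F : I -> pvec d n) :
  symp y (\sum_(i <- r | P i) F i) = \sum_(i <- r | P i) symp y (F i).
Proof. exact: (big_morph _ (sympDr y) (symp0r y)). Qed.

Lemma sympDl y u v : symp (u + v) y = symp u y + symp v y.
Proof. by rewrite sympC sympDr opprD -!sympC. Qed.

Lemma sympZl y u a : symp (a *: u) y = a * symp u y.
Proof. by rewrite sympC sympZr -mulrN -sympC. Qed.

Lemma symp0l y : symp 0 y = 0.
Proof. by rewrite sympC symp0r oppr0. Qed.

Lemma symp_suml y I (r : seq I) (P : pred I) (F : I -> pvec d n) :
  symp (\sum_(i <- r | P i) F i) y = \sum_(i <- r | P i) symp (F i) y.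
Proof. by rewrite sympC symp_sumr -sumrN; apply: eq_bigr => i _; rewrite -sympC. Qed.

Definition syndrome (g : 'I_n -> pvec d n) y : 'rV['F_d]_n := \row_j symp (g j) y.

End Symplectic.

Section HyperbolicBasis.
Variables (d n : nat) (g h : 'I_n -> pvec d n).
Hypothesis Hgh : forall i j, symp (g i) (h j) = (i == j)%:R.
Hypothesis Hgg : forall i j, symp (g i) (g j) = 0.
Hypothesis Hhh : forall i j, symp (h i) (h j) = 0.

Definition hyperbolic_tuple : (n + n).-tuple (pvec d n) :=
  [tuple match split i with inl j => g j | inr j => h j end | i < n + n].

Lemma hyperbolic_tuple_lshift j : hyperbolic_tuple`_(lshift n j) = g j.
Proof. by rewrite nth_mktuple -[lshift n j]/(unsplit (inl j)) unsplitK. Qed.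

Lemma hyperbolic_tuple_rshift j : hyperbolic_tuple`_(rshift n j) = h j.
Proof. by rewrite nth_mktuple -[rshift n j]/(unsplit (inr j)) unsplitK. Qed.

Lemma symp_comb_h (a b : 'I_n -> 'F_d) j :
  symp (\sum_i a i *: g i + \sum_i b i *: h i) (h j) = a j.
Proof.
rewrite sympDl !symp_suml [X in _ + X]big1 => [|i _]; last by rewrite sympZl Hhh mulr0.
rewrite addr0 (bigD1 j) //= sympZl Hgh eqxx mulr1 big1 ?addr0 // => i /negbTE ij.
by rewrite sympZl Hgh ij mulr0.
Qed.

Lemma symp_g_comb (a b : 'I_n -> 'F_d) j :
  symp (g j) (\sum_i a i *: g i + \sum_i b i *: h i) = b j.
Proof.
rewrite sympDr !symp_sumr big1 => [|i _]; last by rewrite sympZr Hgg mulr0.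
rewrite add0r (bigD1 j) //= sympZr Hgh eqxx mulr1 big1 ?addr0 // => i /negbTE ij.
by rewrite sympZr Hgh eq_sym ij mulr0.
Qed.

Lemma free_hyperbolic_tuple : free hyperbolic_tuple.
Proof.
apply/freeP => c c0 i.
pose cg j := c (lshift n j); pose ch j := c (rshift n j).
have {}c0 : \sum_j cg j *: g j + \sum_j ch j *: h j = 0.
  rewrite -[RHS]c0 big_split_ord; congr (_ + _); apply: eq_bigr => j _.
    by rewrite hyperbolic_tuple_lshift.
  by rewrite hyperbolic_tuple_rshift.
case: (splitP i) => j ij.
  rewrite (_ : i = lshift n j); last exact: val_inj.
  by have := symp_comb_h cg ch j; rewrite c0 symp0l.
rewrite (_ : i = rshift n j); last exact: val_inj.
by have := symp_g_comb cg ch j; rewrite c0 symp0r.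
Qed.

(* Pairing with the dual vectors reads off the coordinates in the hyperbolic basis. *)
Lemma symp_expansion y :
  y = \sum_j symp y (h j) *: g j + \sum_j symp (g j) y *: h j.
Proof.
have basis_full : basis_of fullv hyperbolic_tuple.
  rewrite basisEfree free_hyperbolic_tuple subvf dimvf size_tuple /=.
  by change (n * 2 <= n + n)%N; rewrite muln2 addnn.
have := coord_basis basis_full (memvf y).
rewrite big_split_ord /=.
under eq_bigr => j _ do rewrite hyperbolic_tuple_lshift.
under [X in _ + X]eq_bigr => j _ do rewrite hyperbolic_tuple_rshift.
move=> Ey; rewrite {1}Ey; congr (_ + _); apply: eq_bigr => j _.
  by rewrite {2}Ey symp_comb_h.
by rewrite {2}Ey symp_g_comb.
Qed.

End HyperbolicBasis.

Section Pauli.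
Variables (C : numClosedFieldType) (d n : nat) (w : C).
Hypotheses (Hd : prime d) (Hw : d.-primitive_root w).
Local Notation Nop := (@Nop C d n w).
Implicit Types x y : pvec d n.

Lemma Nop_commute x y : Nop x *m Nop y = expw w (symp x y) *: (Nop y *m Nop x).
Proof.
rewrite /Nop !tensM (eq_tens (fun i => Nq_commute Hd Hw _ _ _ _)) tensZ.
by rewrite /symp (expw_sum Hd Hw).
Qed.

Definition Nop_mul_phase x y : C := \prod_i Nq_mul_phase w (xc x i) (zc x i) (xc y i) (zc y i).

Lemma norm_Nop_mul_phase x y : `|Nop_mul_phase x y| = 1.
Proof. by rewrite normr_prod big1 // => i _; exact: (norm_Nq_mul_phase Hd Hw). Qed.

Lemma Nop_mul x y : Nop x *m Nop y = Nop_mul_phase x y *: Nop (x + y).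
Proof.
rewrite /Nop !tensM (eq_tens (fun i => Nq_mul Hd Hw _ _ _ _)) tensZ.
by congr (_ *: _); apply: eq_tens => i; rewrite /xc /zc !mxE.
Qed.

Lemma Nop_unitary y : unitary (Nop y).
Proof. by rewrite /unitary /Nop tens_adj tensM (eq_tens (fun i => Nq_unitary Hd Hw _ _)) tens1. Qed.

Lemma Nop0 : Nop 0 = 1%:M.
Proof. by rewrite /Nop -(@tens1 C d n); apply: eq_tens => i; rewrite /xc /zc !mxE (Nq0 Hd Hw). Qed.

Lemma adj_Nop_mul x y : exists2 c : C, `|c| = 1 & adj (Nop x) *m Nop y = c *: Nop (y - x).
Proof.
have Hx : adj (Nop x) = (Nop_mul_phase (- x) x)^-1 *: Nop (- x).
  have /mulmx1C xK := Nop_unitary x.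
  rewrite -[Nop (- x)]mulmx1 -xK mulmxA Nop_mul addNr Nop0 -scalemxAl mul1mx scalerA.
  by rewrite mulVf ?scale1r // -normr_eq0 norm_Nop_mul_phase oner_eq0.
exists ((Nop_mul_phase (- x) x)^-1 * Nop_mul_phase (- x) y).
  by rewrite normrM normfV !norm_Nop_mul_phase invr1 mulr1.
by rewrite Hx -scalemxAl Nop_mul scalerA addrC.
Qed.

End Pauli.

Section CodeIndex.
Variables (n k : nat).
Hypothesis Hk : (k <= n)%N.
Local Notation nE := (subnK Hk).
Local Notation wid i := (widen_ord (leq_subr k n) i).

Definition logical_index (j : 'I_k) : 'I_n := cast_ord nE (rshift (n - k) j).

Lemma code_indexP (j : 'I_n) : (exists i, j = wid i) \/ (exists j', j = logical_index j').
Proof.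
case: (splitP (cast_ord (esym nE) j)) => i /= ji; [left | right]; exists i; exact: val_inj.
Qed.

Lemma wid_logical_index i j : (wid i == logical_index j) = false.
Proof. by apply/negbTE; rewrite -val_eqE /= neq_ltn ltn_addr. Qed.

Lemma big_code_split (V : nmodType) (F : 'I_n -> V) :
  \sum_(i < n) F i = \sum_(i < n - k) F (wid i) + \sum_(j < k) F (logical_index j).
Proof.
rewrite (reindex (cast_ord nE)) /=; last first.
  by apply: onW_bij; exists (cast_ord (esym nE)) => i; rewrite ?cast_ordK ?cast_ordKV.
by rewrite big_split_ord; congr (_ + _); apply: eq_bigr => i _; congr F; apply: val_inj.
Qed.

Variable d : nat.
Implicit Types (s : 'rV['F_d]_(n - k)) (u : 'rV['F_d]_k) (l : 'rV['F_d]_n).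

Definition in_code s l := [forall i, l 0 (wid i) == s 0 i].

Lemma in_codeP s l : reflect (codel s l) (in_code s l).
Proof. by apply: (iffP forallP) => H i; apply/eqP. Qed.

Definition code_row s u : 'rV['F_d]_n := castmx (erefl, nE) (row_mx s u).

Lemma code_row_wid s u i : code_row s u 0 (wid i) = s 0 i.
Proof.
rewrite castmxE (_ : cast_ord (esym nE) _ = lshift k i) ?row_mxEl ?[cast_ord _ _]ord1 //.
exact: val_inj.
Qed.

Lemma code_row_logical s u j : code_row s u 0 (logical_index j) = u 0 j.
Proof.
rewrite castmxE (_ : cast_ord (esym nE) _ = rshift (n - k) j) ?row_mxEr ?[cast_ord _ _]ord1 //.
exact: val_inj.
Qed.

Lemma in_code_row s u : in_code s (code_row s u).
Proof. by apply/forallP => i; rewrite code_row_wid. Qed.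

Lemma code_rowK s l : in_code s l -> code_row s (\row_j l 0 (logical_index j)) = l.
Proof.
move=> /forallP ls; apply/rowP => j.
have [[i ->] | [j' ->]] := code_indexP j.
  by rewrite code_row_wid (eqP (ls i)).
by rewrite code_row_logical mxE.
Qed.

Lemma sum_code (V : nmodType) s (F : 'rV['F_d]_n -> V) :
  \sum_(l | in_code s l) F l = \sum_u F (code_row s u).
Proof.
rewrite (eq_bigl (mem [set code_row s u | u in predT])) => [|l].
  rewrite big_imset //= => u u' _ _ E; apply/rowP => j.
  by rewrite -(code_row_logical s u) E code_row_logical.
apply/idP/imsetP => [ls | [u _ ->]]; last exact: in_code_row.
by exists (\row_j l 0 (logical_index j)); rewrite ?code_rowK.
Qed.

End CodeIndex.

Section StabilizerSpace.
Variables (d n k : nat) (Hk : (k <= n)%N).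
Variables (g h : 'I_n -> pvec d n).
Hypothesis Hgh : forall i j, symp (g i) (h j) = (i == j)%:R.
Hypothesis Hgg : forall i j, symp (g i) (g j) = 0.
Hypothesis Hhh : forall i j, symp (h i) (h j) = 0.
Variable L : {vspace pvec d n}.
Hypothesis Hgbasis : basis_of L [seq g (widen_ord (leq_subr k n) i) | i <- enum 'I_(n - k)].
Local Notation wid i := (widen_ord (leq_subr k n) i).
Local Notation logical_index := (logical_index Hk).

Lemma memL_stabilizer i : g (wid i) \in L.
Proof. by case/andP: Hgbasis => /eqP <- _; apply/memv_span/map_f; rewrite mem_enum. Qed.

Lemma memL_syndrome y :
  (y \in L) = (syndrome g y == 0) && [forall j, symp y (h (logical_index j)) == 0].
Proof.
apply/idP/idP => [yL | /andP [/eqP sy0 /forallP hy0]].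
  case/andP: Hgbasis => /eqP HL _; rewrite -HL in yL.
  rewrite (coord_span yL); apply/andP; split.
    apply/eqP/rowP => j; rewrite !mxE symp_sumr big1 // => i _.
    by rewrite -tnth_nth tnth_map sympZr Hgg mulr0.
  apply/forallP => j; rewrite symp_suml big1 // => i _.
  by rewrite -tnth_nth tnth_map sympZl Hgh wid_logical_index mulr0.
rewrite (symp_expansion Hgh Hgg Hhh y) [X in _ + X]big1 => [|j _]; last first.
  by move/rowP: sy0 => /(_ j); rewrite !mxE => ->; rewrite scale0r.
rewrite addr0 (big_code_split Hk) [X in _ + X]big1 => [|j _]; last first.
  by rewrite (eqP (hy0 j)) scale0r.
by rewrite addr0 memv_suml // => i _; rewrite memvZ ?memL_stabilizer.
Qed.

End StabilizerSpace.

Section CodeStates.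
Variables (C : numClosedFieldType) (d n : nat) (w : C).
Hypotheses (Hd : prime d) (Hw : d.-primitive_root w).
Variables (g h : 'I_n -> pvec d n).
Hypothesis Hgh : forall i j, symp (g i) (h j) = (i == j)%:R.
Variable v0 : vec C d n.
Hypothesis Hv0unit : adj v0 *m v0 = 1%:M.
Hypothesis Hv0stab : forall i, Nop w (g i) *m v0 = v0.
Local Notation Nop := (@Nop C d n w).
Local Notation e := (ketl w h v0).
Local Notation expw := (expw w).

Definition logical_op (l : 'rV['F_d]_n) : op C d n := \prod_(i < n) Nop (h i) ^+ l 0 i.

Lemma ketlE l : e l = logical_op l *m v0.
Proof. by []. Qed.

Lemma ketl0 : e 0 = v0.
Proof. by rewrite ketlE /logical_op big1 ?mul1mx // => i _; rewrite mxE expr0. Qed.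

Lemma logical_op_unitary l : unitary (logical_op l).
Proof. by apply: unitary_prod => i; apply/unitaryX/(Nop_unitary Hd Hw). Qed.

Lemma Nop_logical_op y l :
  Nop y *m logical_op l = expw (\sum_i symp y (h i) * l 0 i) *: (logical_op l *m Nop y).
Proof.
rewrite (scaled_comm_prod _ (fun i => scaled_commX _ (Nop_commute Hd Hw y (h i)))).
by rewrite (expw_sum Hd Hw); congr (_ *: _); apply: eq_bigr => i _; rewrite (expwM Hd Hw).
Qed.

Lemma stabilizer_ketl j l : Nop (g j) *m e l = expw (l 0 j) *: e l.
Proof.
rewrite ketlE mulmxA Nop_logical_op -scalemxAl -mulmxA Hv0stab; congr (expw _ *: _).
rewrite (bigD1 j) //= Hgh eqxx mul1r big1 ?addr0 // => i /negbTE ji.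
by rewrite Hgh eq_sym ji mul0r.
Qed.

Lemma exists_row_neq (l l' : 'rV['F_d]_n) : l != l' -> exists j, l 0 j != l' 0 j.
Proof.
move=> ll'; apply/existsP; apply: contraNT ll' => /existsPn ll'.
by apply/eqP/rowP => j; apply/eqP/negPn/ll'.
Qed.

Lemma ketl_orthonormal l l' : adj (e l) *m e l' = (l == l')%:R%:M.
Proof.
case: eqVneq => [<- | ll'].
  rewrite ketlE adjM mulmxA -(mulmxA (adj v0)) logical_op_unitary mulmx1.
  exact: Hv0unit.
have [j lj] := exists_row_neq ll'.
rewrite mulr0n raddf0.
apply: (unitary_eigen_orth (Nop_unitary Hd Hw (g j)) (stabilizer_ketl j l) (stabilizer_ketl j l')).
by rewrite (conj_expw_mul_eq1 Hd Hw).
Qed.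

Lemma ketl_complete : \sum_l e l *m adj (e l) = 1%:M.
Proof. exact: orthonormal_complete ketl_orthonormal. Qed.

(* Distinct code states have distinct stabilizer eigenvalues, so only e m survives
   in the expansion of v over the code basis. *)
Lemma joint_eigenvector (m : 'rV['F_d]_n) (v : vec C d n) :
  (forall j, Nop (g j) *m v = expw (m 0 j) *: v) -> v = (adj (e m) *m v) 0 0 *: e m.
Proof.
move=> Hv; rewrite -{1}[v]mul1mx -ketl_complete mulmx_suml (bigD1 m) //= big1 ?addr0.
  by rewrite -mulmxA {1}[adj (e m) *m v]mx11_scalar mul_mx_scalar.
move=> l ml; have [j lj] := exists_row_neq ml.
rewrite -mulmxA (unitary_eigen_orth (Nop_unitary Hd Hw (g j)) (stabilizer_ketl j l) (Hv j)).
  by rewrite mulmx0.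
by rewrite (conj_expw_mul_eq1 Hd Hw).
Qed.

Lemma Nop_ketl y l :
  Nop y *m e l = (adj (e (l + syndrome g y)) *m (Nop y *m e l)) 0 0 *: e (l + syndrome g y).
Proof.
apply: joint_eigenvector => j.
rewrite mulmxA Nop_commute // -scalemxAl -mulmxA stabilizer_ketl -scalemxAr scalerA.
by rewrite -(expwD Hd Hw) !mxE addrC.
Qed.

Lemma ketl_Nop_ketl y l :
  adj (e l) *m Nop y *m e l = expw (\sum_i symp y (h i) * l 0 i) *: (adj v0 *m Nop y *m v0).
Proof.
rewrite ketlE adjM -mulmxA (mulmxA (Nop y)) Nop_logical_op -scalemxAl -scalemxAr.
by rewrite !mulmxA -(mulmxA _ _ (logical_op l)) logical_op_unitary mulmx1.
Qed.

Lemma norm_vacuum_Nop y : `|(adj v0 *m Nop y *m v0) 0 0| = (syndrome g y == 0)%:R.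
Proof.
have := Nop_ketl y 0; rewrite add0r ketl0; set c := (_ *m _) 0 0 => Hy.
rewrite -mulmxA Hy -scalemxAr -{1}ketl0 ketl_orthonormal !mxE eqxx mulr1n eq_sym.
case: eqP => [sy0 | _]; last by rewrite mulr0 normr0.
rewrite mulr1; rewrite sy0 ketl0 in Hy.
exact: unitary_map_unit_norm (Nop_unitary Hd Hw y) Hv0unit Hv0unit Hy.
Qed.

End CodeStates.

Section CodeTrace.
Variables (C : numClosedFieldType) (d n k : nat) (w : C).
Hypotheses (Hd : prime d) (Hk : (k <= n)%N) (Hw : d.-primitive_root w).
Variable L : {vspace pvec d n}.
Variables (g h : 'I_n -> pvec d n).
Hypothesis Hgbasis : basis_of L [seq g (widen_ord (leq_subr k n) i) | i <- enum 'I_(n - k)].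
Hypothesis Hgh : forall i j, symp (g i) (h j) = (i == j)%:R.
Hypothesis Hgg : forall i j, symp (g i) (g j) = 0.
Hypothesis Hhh : forall i j, symp (h i) (h j) = 0.
Variable v0 : vec C d n.
Hypothesis Hv0unit : adj v0 *m v0 = 1%:M.
Hypothesis Hv0stab : forall i, Nop w (g i) *m v0 = v0.
Local Notation Nop := (@Nop C d n w).
Local Notation e := (ketl w h v0).
Local Notation logical_index := (logical_index Hk).
Implicit Types (s t : 'rV['F_d]_(n - k)) (l : 'rV['F_d]_n) (x y : pvec d n).

Lemma code_expw_sum s (a : 'I_n -> 'F_d) :
  `|\sum_(l | in_code s l) expw w (\sum_i a i * l 0 i)| =
  (d ^ k)%:R * [forall j, a (logical_index j) == 0]%:R.
Proof.
pose phase_s := expw w (\sum_i a (widen_ord (leq_subr k n) i) * s 0 i).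
rewrite (sum_code Hk) (eq_bigr (fun u : 'rV['F_d]_k =>
  phase_s * expw w (\sum_j a (logical_index j) * u 0 j))).
  rewrite -mulr_sumr normrM (norm_expw Hd Hw) mul1r (sum_expw_dot Hd Hw).
  by rewrite ger0_norm // mulr_ge0 ?ler0n.
move=> u _; rewrite (big_code_split Hk) (expwD Hd Hw) /phase_s.
congr (_ * _); congr (expw w _).
  by apply: eq_bigr => i _; rewrite code_row_wid.
by apply: eq_bigr => j _; rewrite code_row_logical.
Qed.

Lemma code_trace_Nop s y :
  `|\sum_(l | in_code s l) (adj (e l) *m Nop y *m e l) 0 0| = (d ^ k)%:R * (y \in L)%:R.
Proof.
under eq_bigr => l _ do rewrite (ketl_Nop_ketl Hd Hw) mxE.
rewrite -mulr_suml normrM code_expw_sum (norm_vacuum_Nop Hd Hw Hgh Hv0unit Hv0stab).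
by rewrite (memL_syndrome Hk Hgh Hgg Hhh Hgbasis) -mulrA -[in LHS]natrM mulnb andbC.
Qed.

Variable Pi : 'rV['F_d]_(n - k) -> op C d n.
Hypothesis HPi : forall s, orth_proj_onto (Pi s)
                   (fun v => exists l, codel s l /\ v = ketl w h v0 l).

Lemma Pi_ketl s l : in_code s l -> Pi s *m e l = e l.
Proof. by move=> /in_codeP ls; apply: (HPi s).1; exists l. Qed.

Lemma Pi_sum s : Pi s = \sum_(l | in_code s l) e l *m adj (e l).
Proof.
rewrite -[Pi s]mulmx1 -(ketl_complete Hd Hw Hgh Hv0unit Hv0stab) mulmx_sumr.
rewrite (bigID (in_code s)) /= [X in _ + X]big1 ?addr0 => [|l ls].
  by apply: eq_bigr => l ls; rewrite mulmxA Pi_ketl.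
rewrite mulmxA (HPi s).2 ?mul0mx // => _ [l' [l's ->]].
rewrite (ketl_orthonormal Hd Hw Hgh Hv0unit Hv0stab) (_ : (l' == l) = false).
  by rewrite mulr0n raddf0.
by apply: contraNF ls => /eqP <-; apply/in_codeP.
Qed.

Lemma adj_Pi s : adj (Pi s) = Pi s.
Proof. by rewrite Pi_sum adj_sum; apply: eq_bigr => l _; rewrite adjM adjK. Qed.

Lemma trace_Pi s (A : op C d n) :
  \tr (Pi s *m A) = \sum_(l | in_code s l) (adj (e l) *m A *m e l) 0 0.
Proof.
rewrite Pi_sum mulmx_suml raddf_sum; apply: eq_bigr => l _.
by rewrite -mulmxA /= mxtrace_mulC trace_mx11 mulmxA.
Qed.

Variable xhat : 'rV['F_d]_(n - k) -> pvec d n.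
Hypothesis Hxhat : forall t i, symp (g (widen_ord (leq_subr k n) i)) (xhat t) = t 0 i.

Lemma Pi_Nop_ketl s t l :
  in_code s l -> Pi (t + s) *m (Nop (xhat t) *m e l) = Nop (xhat t) *m e l.
Proof.
move=> /forallP ls; rewrite (Nop_ketl Hd Hw Hgh Hv0unit Hv0stab) -scalemxAr Pi_ketl //.
by apply/forallP => i; rewrite !mxE Hxhat (eqP (ls i)) addrC.
Qed.

Lemma norm_trace_recovery s t x :
  `|\tr (Pi s *m (adj (Nop (xhat t)) *m Pi (t + s) *m Nop x))| =
  (d ^ k)%:R * (x - xhat t \in L)%:R.
Proof.
have [c c1 HN] := adj_Nop_mul Hd Hw (xhat t) x.
rewrite trace_Pi (eq_bigr (fun l => c * (adj (e l) *m Nop (x - xhat t) *m e l) 0 0)).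
  by rewrite -mulr_sumr normrM c1 mul1r code_trace_Nop.
move=> l ls.
have Pi_left : adj (Nop (xhat t) *m e l) *m Pi (t + s) = adj (Nop (xhat t) *m e l).
  by rewrite -{1}(adj_Pi (t + s)) -adjM Pi_Nop_ketl.
rewrite !mulmxA -adjM Pi_left adjM -(mulmxA (adj (e l))) HN.
by rewrite -scalemxAr -!scalemxAl mxE.
Qed.

End CodeTrace.

Theorem lemma2
  (C : numClosedFieldType) (d n k : nat) (w : C)
  (Hd : prime d) (Hn : (1 <= n)%N) (Hk : (k <= n)%N)
  (Hw : d.-primitive_root w)
  (L : {vspace pvec d n})
  (HLiso : forall x y, x \in L -> y \in L -> symp x y = 0)
  (HLdim : \dim L = (n - k)%N)
  (g h : 'I_n -> pvec d n)
  (Hgbasis : basis_of L [seq g (widen_ord (leq_subr k n) i) | i <- enum 'I_(n - k)])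
  (Hgh : forall i j, symp (g i) (h j) = (i == j)%:R)
  (Hgg : forall i j, symp (g i) (g j) = 0)
  (Hhh : forall i j, symp (h i) (h j) = 0)
  (v0 : vec C d n)
  (Hv0unit : adj v0 *m v0 = 1%:M)
  (Hv0stab : forall i, Nop w (g i) *m v0 = v0)
  (Pi : 'rV['F_d]_(n - k) -> op C d n)
  (HPi : forall s, orth_proj_onto (Pi s)
                     (fun v => exists l, codel s l /\ v = ketl w h v0 l))
  (xhat : 'rV['F_d]_(n - k) -> pvec d n)
  (Hxhat : forall t i, symp (g (widen_ord (leq_subr k n) i)) (xhat t) = t 0 i)
  (P : pvec d n -> C)
  (HP0 : forall x, 0 <= P x) (HP1 : \sum_x P x = 1)
  (s t : 'rV['F_d]_(n - k)) :
  Fe ((d ^ k)%:R^-1 *: Pi s)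
     (kcomp (fun _ : unit => adj (Nop w (xhat t)) *m Pi (t + s)) (pauli_kraus w P))
  = \sum_(x | x - xhat t \in L) P x.
Proof.
(* HLiso and HLdim already follow from Hgbasis and the hyperbolic relations, and the
   identity is linear in P. *)
rewrite /Fe /kcomp /pauli_kraus (reindex (fun x : pvec d n => (tt, x))) /=; last first.
  by apply: onW_bij; exists snd => // [[[] x]].
rewrite [RHS]big_mkcond /=; apply: eq_bigr => x _.
rewrite -!scalemxAr -scalemxAl !mxtraceZ !normrM !exprMn.
rewrite (norm_trace_recovery Hd Hk Hw Hgbasis Hgh Hgg Hhh Hv0unit Hv0stab HPi Hxhat).
have dk0 : ((d ^ k)%:R : C) != 0 by rewrite pnatr_eq0 -lt0n expn_gt0 prime_gt0.
rewrite ger0_norm ?sqrtC_ge0 // sqrtCK ger0_norm ?invr_ge0 ?ler0n //.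
case: ifP => _; last by rewrite mulr0 expr0n /= !mulr0.
by rewrite mulr1 -exprMn mulVf // expr1n mulr1.
Qed.
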